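(* Consider the protocol $P_{RL}$ with parameter $N$ on a directed ring of size $n$ with $2\le n\le N$. Let $C_0\in\mathcal{C}_{NI}$ (defined in the context). Then no new leader is created in any execution starting from $C_0$: for every configuration $D$ reachable from $C_0$ and every $D'$ with $D\to D'$, every agent with $\mathit{leader}=0$ in $D$ has $\mathit{leader}=0$ in $D'$.
   Context: Model. A population is a directed ring of $n\ge 2$ anonymous agents $u_0,\dots,u_{n-1}$ (indices modulo $n$) with arcs $e_i=(u_i,u_{i+1})$. A configuration $C$ assigns a state to each agent; $C\to C'$ means that $C'$ is obtained from $C$ by one interaction on some arc $e_i$, in which initiator $u_i$ and responder $u_{i+1}$ update their states by the transition function and all other agents keep their states. A configuration is reachable from $C$ if it is obtained from $C$ by finitely many (possibly zero) such steps. Protocol $P_{RL}$ (parameter $N$). Each agent has variables $\mathit{leader}\in\{0,1\}$, $\mathit{bullet}\in\{0,1,2\}$, $\mathit{shield}\in\{0,1\}$, $\mathit{signal}\in\{0,1\}$, $\mathit{dist}\in\{0,\dots,N\}$. In an interaction with initiator $l$ and responder $r$ the following are executed in order: 1. If $l.\mathit{leader}=1$ then $l.\mathit{dist}\gets 0$. 2. If $r.\mathit{leader}=1$ then $r.\mathit{dist}\gets 0$; else if $r.\mathit{bullet}=0$ then $r.\mathit{dist}\gets\min(l.\mathit{dist}+1,N)$. 3. If $r.\mathit{dist}=N$ then $r.\mathit{leader}\gets1$, $r.\mathit{bullet}\gets2$, $r.\mathit{shield}\gets1$, $r.\mathit{signal}\gets0$, $r.\mathit{dist}\gets0$. 4.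 If $l.\mathit{leader}=1$ and $l.\mathit{signal}=1$ then $l.\mathit{bullet}\gets2$, $l.\mathit{shield}\gets1$, $l.\mathit{signal}\gets0$. 5. If $r.\mathit{leader}=1$ and $r.\mathit{signal}=1$ then $r.\mathit{bullet}\gets1$, $r.\mathit{shield}\gets0$, $r.\mathit{signal}\gets0$. 6. If $l.\mathit{bullet}>0$ and $r.\mathit{leader}=1$: set $r.\mathit{leader}\gets0$ if ($l.\mathit{bullet}=2$ and $r.\mathit{shield}=0$); then $l.\mathit{bullet}\gets0$. Else, if $l.\mathit{bullet}>0$ and $r.\mathit{leader}=0$: if $r.\mathit{bullet}=0$ then $r.\mathit{bullet}\gets l.\mathit{bullet}$; then $l.\mathit{bullet}\gets0$ and $r.\mathit{signal}\gets0$. 7. $l.\mathit{signal}\gets\max(l.\mathit{signal},r.\mathit{signal},r.\mathit{leader})$. An agent is a leader if $\mathit{leader}=1$ and a follower otherwise. Definitions (in a configuration with at least one leader). $\mathrm{dist}_L(i)=\min\{j\ge0: u_{i-j}.\mathit{leader}=1\}$ and $\mathrm{dist}_R(i)=\min\{j\ge0: u_{i+j}.\mathit{leader}=1\}$. $\mathrm{peaceful}(i)$ holds iff $u_{i-\mathrm{dist}_L(i)}.\mathit{shield}=1$ and $u_{i-j}.\mathit{signal}=0$ for all $0\le j\le\mathrm{dist}_L(i)$. $\mathrm{modest}(i)$ holds iff $\mathrm{peaceful}(i)$ holds and $u_{i-j}.\mathit{dist}\le\mathrm{dist}_L(i-j)$ for all $0\le j\le\mathrm{dist}_L(i)$. $\mathrm{secure}(i)$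 holds iff $u_i.\mathit{dist}=0$ when $u_i.\mathit{leader}=1$, and $u_i.\mathit{dist}\le N-\mathrm{dist}_R(i)$ when $u_i.\mathit{leader}=0$. $\mathcal{C}_{PB}$ is the set of configurations with at least one leader in which every $u_j$ with $u_j.\mathit{bullet}=2$ satisfies $\mathrm{peaceful}(j)$. $\mathcal{C}_{NI}$ is the set of configurations in $\mathcal{C}_{PB}$ in which every agent $u_i$ satisfies $\mathrm{secure}(i)$ and every $u_j$ with $u_j.\mathit{bullet}=2$ satisfies $\mathrm{modest}(j)$. *)

From mathcomp Require Import all_boot.
Set Implicit Arguments. Unset Strict Implicit. Unset Printing Implicit Defensive.

(* Agent state; leader/shield/signal in {0,1} are booleans (1 = true),
   bullet in {0,1,2} is 'I_3, dist in {0..N} is 'I_N.+1. *)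
Record State (N : nat) := mkS {
  leader : bool; bullet : 'I_3; shield : bool; signal : bool; dist : 'I_N.+1 }.

Section Protocol.
Variable N : nat.
Notation S := (State N).

Definition set_dist (s : S) (d : 'I_N.+1) : S :=
  mkS (leader s) (bullet s) (shield s) (signal s) d.
Definition set_bss (s : S) (b : 'I_3) (sh sg : bool) : S :=
  mkS (leader s) b sh sg (dist s).
Definition set_leader (s : S) (x : bool) : S :=
  mkS x (bullet s) (shield s) (signal s) (dist s).
Definition set_bullet (s : S) (b : 'I_3) : S :=
  mkS (leader s) b (shield s) (signal s) (dist s).
Definition set_signal (s : S) (x : bool) : S :=
  mkS (leader s) (bullet s) (shield s) x (dist s).

(* The transition function: initiator l, responder r; steps 1..7 in order. *)
Definition delta (l r : S) : S * S :=
  let l1 := if leader l then set_dist l ord0 else l in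
  let r2 := if leader r then set_dist r ord0
            else if (bullet r : nat) == 0 then set_dist r (inord (minn (dist l1).+1 N))
            else r in
  let r3 := if (dist r2 : nat) == N then mkS true (inord 2) true false ord0 else r2 in
  let l4 := if leader l1 && signal l1 then set_bss l1 (inord 2) true false else l1 in
  let r5 := if leader r3 && signal r3 then set_bss r3 (inord 1) false false else r3 in
  let '(l6, r6) :=
    if (0 < bullet l4) && leader r5 then
      (set_bullet l4 ord0,
       if ((bullet l4 : nat) == 2) && ~~ shield r5 then set_leader r5 false else r5)
    else if (0 < bullet l4) && ~~ leader r5 then
      (set_bullet l4 ord0,
       set_signal (if (bullet r5 : nat) == 0 then set_bullet r5 (bullet l4) else r5) false)
    else (l4, r5) in
  let l7 := set_signal l6 [|| signal l6, signal r6 | leader r6] in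
  (l7, r6).

End Protocol.

Lemma ord_pos n (i : 'I_n) : 0 < n.
Proof. exact: (leq_ltn_trans (leq0n i) (ltn_ord i)). Qed.

(* u_{i+k} and u_{i-k}, indices modulo n *)
Definition shift n (i : 'I_n) (k : nat) : 'I_n :=
  Ordinal (ltn_pmod (i + k) (ord_pos i)).
Definition back n (i : 'I_n) (k : nat) : 'I_n := shift i (n - k %% n).

Definition config (N n : nat) := 'I_n -> State N.

Definition step N n (C C' : config N n) : Prop :=
  exists i : 'I_n,
    let j := shift i 1 in
    let p := delta (C i) (C j) in
    forall k : 'I_n, C' k = if k == i then p.1 else if k == j then p.2 else C k.

Inductive reachable N n (C : config N n) : config N n -> Prop :=
| reach_refl : reachable C C
| reach_step D D' : reachable C D -> step D D' -> reachable C D'.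

Section Preds.
Variables N n : nat.
Variable C : config N n.

(* dist_L(i) = min{j >= 0 : u_{i-j}.leader = 1}, dist_R(i) = min{j >= 0 : u_{i+j}.leader = 1};
   computed as the first such j in 0..n-1 (these are only used when a leader exists). *)
Definition distL (i : 'I_n) : nat := find (fun j => leader (C (back i j))) (iota 0 n).
Definition distR (i : 'I_n) : nat := find (fun j => leader (C (shift i j))) (iota 0 n).

Definition peaceful (i : 'I_n) : bool :=
  shield (C (back i (distL i))) &&
  all (fun j => ~~ signal (C (back i j))) (iota 0 (distL i).+1).

Definition modest (i : 'I_n) : bool :=
  peaceful i &&
  all (fun j => (dist (C (back i j)) : nat) <= distL (back i j)) (iota 0 (distL i).+1).

Definition secure (i : 'I_n) : bool :=
  if leader (C i) then (dist (C i) : nat) == 0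
  else (dist (C i) : nat) <= N - distR i.

Definition has_leader : Prop := exists i, leader (C i).

Definition C_PB : Prop :=
  has_leader /\ forall j, (bullet (C j) : nat) = 2 -> peaceful j.

Definition C_NI : Prop :=
  C_PB /\ (forall i, secure i) /\ (forall j, (bullet (C j) : nat) = 2 -> modest j).
End Preds.

(* The ring is unrolled into an n-periodic sequence of states, so that arcs become intervals
   of nat. Two invariants hold along every execution from C_NI. First, a leader-free window of
   length m starting at p has dist p + m <= N; hence the dist relayed to a follower never
   reaches N and step 3 never creates a leader. Second, every bullet of value 2 lies in a
   modest segment behind its leader: the leader is shielded, nobody in between signals, and
   every dist is at most the distance to that leader. A leader guarded by a modest segment cannot be shot, and a shot bullet extends
   its segment by one agent, which preserves the second invariant. A leader is killed only by
   a bullet of value 2, whose segment keeps the dists of the merged window small, which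
   preserves the first. *)

From mathcomp Require Import all_boot zify.
Set Implicit Arguments. Unset Strict Implicit. Unset Printing Implicit Defensive.

Section Transition.
Variable N : nat.
Implicit Types l r a b : State N.

Definition sent_dist l : nat := if leader l then 0 else dist l.
Definition fired_bullet l : nat := if leader l && signal l then 2 else bullet l.
(* The responder's dist after step 2; step 3 promotes it exactly when this reaches N. *)
Definition relayed_dist l r : nat :=
  if leader r then 0 else if (bullet r : nat) == 0 then minn (sent_dist l).+1 N else dist r.

Lemma sent_dist_le l : sent_dist l <= dist l.
Proof. by rewrite /sent_dist; case: leader. Qed.

Definition ready_l l : State N :=
  let l1 := if leader l then set_dist l ord0 else l in
  if leader l1 && signal l1 then set_bss l1 (inord 2) true false else l1.

Definition relay l r : State N :=
  let l1 := if leader l then set_dist l ord0 else l in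
  if leader r then set_dist r ord0
  else if (bullet r : nat) == 0 then set_dist r (inord (minn (dist l1).+1 N)) else r.

Definition ready_r l r : State N :=
  let r3 := if (dist (relay l r) : nat) == N then mkS true (inord 2) true false ord0
            else relay l r in
  if leader r3 && signal r3 then set_bss r3 (inord 1) false false else r3.

Definition shoot a b : State N * State N :=
  if (0 < bullet a) && leader b then
    (set_bullet a ord0,
     if ((bullet a : nat) == 2) && ~~ shield b then set_leader b false else b)
  else if (0 < bullet a) && ~~ leader b then
    (set_bullet a ord0,
     set_signal (if (bullet b : nat) == 0 then set_bullet b (bullet a) else b) false)
  else (a, b).

Lemma deltaE l r : delta l r =
  (set_signal (shoot (ready_l l) (ready_r l r)).1
     [|| signal (shoot (ready_l l) (ready_r l r)).1, signal (shoot (ready_l l) (ready_r l r)).2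
       | leader (shoot (ready_l l) (ready_r l r)).2],
   (shoot (ready_l l) (ready_r l r)).2).
Proof.
change (delta l r) with (let: (l6, r6) := shoot (ready_l l) (ready_r l r) in
  (set_signal l6 [|| signal l6, signal r6 | leader r6], r6)).
by case: shoot.
Qed.

Lemma ready_l_fields l :
  [/\ leader (ready_l l) = leader l, bullet (ready_l l) = fired_bullet l :> nat,
      shield (ready_l l) = (leader l && signal l) || shield l,
      signal (ready_l l) = signal l && ~~ leader l & dist (ready_l l) = sent_dist l :> nat].
Proof. by case: l => [[] b sh [] d]; rewrite /fired_bullet /= ?inordK. Qed.

Lemma relay_fields l r :
  [/\ leader (relay l r) = leader r, bullet (relay l r) = bullet r,
      shield (relay l r) = shield r, signal (relay l r) = signal r
    & dist (relay l r) = relayed_dist l r :> nat].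
Proof.
case: r => [[] b sh sg d] //; rewrite /relay /relayed_dist /sent_dist /=.
case: ifP => // _; rewrite inordK; last by rewrite ltnS geq_minr.
by case: (leader l).
Qed.

Section NoSpawn.
Variables l r : State N.
Hypothesis no_spawn : relayed_dist l r < N.

Lemma ready_r_fields :
  [/\ leader (ready_r l r) = leader r,
      bullet (ready_r l r) = (if leader r && signal r then 1 else bullet r) :> nat,
      shield (ready_r l r) = ~~ (leader r && signal r) && shield r,
      signal (ready_r l r) = signal r && ~~ leader r
    & dist (ready_r l r) = relayed_dist l r :> nat].
Proof.
have [Hl Hb Hsh Hsg Hd] := relay_fields l r.
rewrite /ready_r Hd (ltn_eqF no_spawn) Hl Hsg.
by case Hr: (leader r); case Hs: (signal r) => /=; rewrite ?inordK ?Hl ?Hb ?Hsh ?Hsg ?Hd ?Hr ?Hs.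
Qed.
End NoSpawn.

Lemma shoot_fields1 a b :
  [/\ leader (shoot a b).1 = leader a, bullet (shoot a b).1 = 0 :> nat,
      shield (shoot a b).1 = shield a, signal (shoot a b).1 = signal a
    & dist (shoot a b).1 = dist a].
Proof.
rewrite /shoot; case: (leader b); rewrite ?andbT ?andbF /=; case: ltnP => //=.
all: by rewrite leqn0 => /eqP.
Qed.

Lemma shoot_fields2 a b :
  [/\ leader (shoot a b).2 = leader b && ~~ (((bullet a : nat) == 2) && ~~ shield b),
      (bullet (shoot a b).2 : nat) =
        (if ~~ leader b && ((bullet b : nat) == 0) then nat_of_ord (bullet a) else bullet b),
      shield (shoot a b).2 = shield b,
      signal (shoot a b).2 = signal b && ~~ ((0 < bullet a) && ~~ leader b)
    & dist (shoot a b).2 = dist b].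
Proof.
case: a b => [la [[|[|[|?]]] ?] sha sga da] [[] bb [] [] db]; rewrite /shoot //=.
all: by case: ifP => // /eqP ->.
Qed.

Section Delta.
Variables l r : State N.

Let shoot_ready_l := shoot_fields1 (ready_l l) (ready_r l r).
Let shoot_ready_r := shoot_fields2 (ready_l l) (ready_r l r).

Lemma delta_leader_l : leader (delta l r).1 = leader l.
Proof. by rewrite deltaE /=; case: shoot_ready_l => -> *; case: (ready_l_fields l) => ->. Qed.

Lemma delta_bullet_l : bullet (delta l r).1 = 0 :> nat.
Proof. by rewrite deltaE /=; case: shoot_ready_l. Qed.

Lemma delta_shield_l : shield (delta l r).1 = (leader l && signal l) || shield l.
Proof.
by rewrite deltaE /=; case: shoot_ready_l => _ _ -> *;
  case: (ready_l_fields l) => _ _ ->.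
Qed.

Lemma delta_signal_l : signal (delta l r).1 =
  [|| signal l && ~~ leader l, signal (delta l r).2 | leader (delta l r).2].
Proof.
by rewrite deltaE /=; case: shoot_ready_l => _ _ _ -> *;
  case: (ready_l_fields l) => _ _ _ ->.
Qed.

Lemma delta_dist_l : dist (delta l r).1 = sent_dist l :> nat.
Proof.
by rewrite deltaE /=; case: shoot_ready_l => _ _ _ _ ->;
  case: (ready_l_fields l) => _ _ _ _ ->.
Qed.

Hypothesis no_spawn : relayed_dist l r < N.

Lemma delta_leader_r :
  leader (delta l r).2 = leader r && ~~ ((fired_bullet l == 2) && (signal r || ~~ shield r)).
Proof.
rewrite deltaE /=; case: shoot_ready_r => -> *.
case: (ready_l_fields l) => _ -> *; case: (ready_r_fields no_spawn) => -> _ -> *.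
by case: (leader r); case: (signal r); case: (shield r).
Qed.

Lemma delta_bullet_r : bullet (delta l r).2 =
  (if leader r then (if signal r then 1 else bullet r)
   else if (bullet r : nat) == 0 then fired_bullet l else bullet r) :> nat.
Proof.
rewrite deltaE /=; case: shoot_ready_r => _ -> *.
case: (ready_l_fields l) => _ -> *; case: (ready_r_fields no_spawn) => -> -> *.
by case: (leader r); case: (signal r).
Qed.

Lemma delta_shield_r : shield (delta l r).2 = ~~ (leader r && signal r) && shield r.
Proof.
by rewrite deltaE /=; case: shoot_ready_r => _ _ -> *;
  case: (ready_r_fields no_spawn) => _ _ ->.
Qed.

Lemma delta_signal_r : signal (delta l r).2 = [&& signal r, ~~ leader r & fired_bullet l == 0].
Proof.
rewrite deltaE /=; case: shoot_ready_r => _ _ _ -> *.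
case: (ready_l_fields l) => _ -> *; case: (ready_r_fields no_spawn) => -> _ _ -> *.
by case: (leader r); case: (signal r); rewrite //= ?andbT lt0n negbK.
Qed.

Lemma delta_dist_r : dist (delta l r).2 = relayed_dist l r :> nat.
Proof.
by rewrite deltaE /=; case: shoot_ready_r => _ _ _ _ ->;
  case: (ready_r_fields no_spawn) => _ _ _ _ ->.
Qed.

End Delta.

End Transition.

Section Sequences.
Variables N n : nat.
Implicit Types (G : nat -> State N) (k p s m : nat).

Definition periodic G := forall k, G (k + n) = G k.

Definition rebase G s : nat -> State N := fun k => G (s + k).

Definition followers G p m := forall t, t < m -> ~~ leader (G (p + t)).

Lemma periodic_mod G k : periodic G -> G k = G (k %% n).
Proof.
move=> HG; rewrite {1}(divn_eq k n) addnC.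
by elim: (k %/ n) => [|j IH]; rewrite ?addn0 // mulSnr addnA HG.
Qed.

Lemma periodicE G a b : periodic G -> a = b %[mod n] -> G a = G b.
Proof. by move=> HG E; rewrite (periodic_mod a HG) E -periodic_mod. Qed.

Lemma periodic_rebase G s : periodic G -> periodic (rebase G s).
Proof. by move=> HG k; rewrite /rebase addnA HG. Qed.

Lemma followers_lt_period G s m : 0 < n -> periodic G ->
  leader (G s) -> followers G s.+1 m -> m < n.
Proof.
move=> n_gt0 HG Ls F; rewrite ltnNge; apply/negP => n_le_m.
by have := F n.-1; rewrite addSnnS prednK // HG Ls; move/(_ ltac:(lia)).
Qed.

Lemma leader_in_period G a k : 0 < n -> periodic G -> leader (G a) ->
  exists2 b, k < b <= k + n & leader (G b).
Proof.
move=> n_gt0 HG La; set x := k + n - a %% n.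
have a_lt : a %% n < n by rewrite ltn_mod.
have x_lt : x %% n < n by rewrite ltn_mod.
have Ex := divn_eq x n.
exists (k + n - x %% n); first by apply/andP; split; lia.
rewrite (periodicE HG (_ : _ = a %[mod n])) //.
have -> : k + n - x %% n = x %/ n * n + a %% n by lia.
by rewrite modnMDl modn_mod.
Qed.

Lemma nearest_leader_left G a k : 0 < n -> periodic G -> leader (G a) ->
  exists s d, [/\ s + d = k + n, d < n, leader (G s) & followers G s.+1 d].
Proof.
move=> n_gt0 HG La; have [b /andP[k_lt_b b_le] Lb] := leader_in_period k n_gt0 HG La.
have exP : exists s, (s <= k + n) && leader (G s) by exists b; rewrite b_le.
have ubP s : (s <= k + n) && leader (G s) -> s <= k + n by case/andP.
case: (ex_maxnP exP ubP) => s /andP[s_le Ls] s_max.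
exists s, (k + n - s); split => //; first lia.
  have := s_max b; rewrite b_le Lb; move/(_ isT); lia.
move=> t t_lt; apply/negP => Lt.
by have := s_max (s.+1 + t); rewrite Lt andbT; move/(_ ltac:(lia)); lia.
Qed.

Definition seq_step G G' q := forall w, G' w =
  if w == q %[mod n] then (delta (G q) (G q.+1)).1
  else if w == q.+1 %[mod n] then (delta (G q) (G q.+1)).2 else G w.

Lemma seq_step_rebase G G' q s q' : periodic G -> seq_step G G' q ->
  s + q' = q %[mod n] -> seq_step (rebase G s) (rebase G' s) q'.
Proof.
move=> HG step E w; have E1 : s + q'.+1 = q.+1 %[mod n].
  by apply/eqP; rewrite addnS -addn1 -[q.+1]addn1 eqn_modDr; apply/eqP.
rewrite /rebase step -[w == q' %[mod n]](eqn_modDl s) -[w == q'.+1 %[mod n]](eqn_modDl s).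
by rewrite E E1 (periodicE HG E) (periodicE HG E1).
Qed.

(* secure(i) read on sequences: a leader-free window of length m from p forces
   dist_R(p) >= m. *)
Definition secure_seq G := forall p m, followers G p m -> dist (G p) + m <= N.

Definition modest_seg G s m :=
  shield (G s) /\ forall u, u <= m -> ~~ signal (G (s + u)) /\ dist (G (s + u)) <= u.

(* modest(j) for every bullet of value 2, read from the leader s at distance m. *)
Definition modest_bullets G := forall s m, leader (G s) -> followers G s.+1 m ->
  bullet (G (s + m)) = 2 :> nat -> modest_seg G s m.

Lemma secure_rebase G s : secure_seq G -> secure_seq (rebase G s).
Proof. by move=> HG p m F; apply: HG => t /F; rewrite /rebase addnA. Qed.

Lemma modest_rebase G s : modest_bullets G -> modest_bullets (rebase G s).
Proof.
move=> HG s0 m L F B; have [||Sh U] := HG (s + s0) m L.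
- by move=> t /F; rewrite /rebase addnA addnS.
- by rewrite -addnA.
- by split=> // u /U; rewrite /rebase addnA.
Qed.

Lemma addn_rebase_mod s p : 0 < n -> s + (n - s %% n + p) = p %[mod n].
Proof.
move=> n_gt0; have := divn_eq s n; have : s %% n < n by rewrite ltn_mod.
move=> s_lt Es; rewrite addnA.
have -> : s + (n - s %% n) = (s %/ n).+1 * n by rewrite mulSnr; lia.
by rewrite modnMDl.
Qed.

Lemma addn_mod_neq a t : 0 < t < n -> (a + t == a %[mod n]) = false.
Proof.
move=> t_bd; rewrite -[X in _ == X %% n]addn0 eqn_modDl mod0n modn_small; lia.
Qed.

Lemma rebase_offset G s p : 0 < n -> periodic G ->
  forall t, G (p + t) = rebase G s (n - s %% n + p + t).
Proof. by move=> n_gt0 HG t; apply: (periodicE HG); rewrite -addnA addn_rebase_mod. Qed.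

Lemma secure_unrebase G s : 0 < n -> periodic G -> secure_seq (rebase G s) -> secure_seq G.
Proof.
move=> n_gt0 HG Hs p m F; have E := rebase_offset s p n_gt0 HG.
have := Hs (n - s %% n + p) m; rewrite -[p in dist (G p)]addn0 E addn0; apply.
by move=> t /F; rewrite E.
Qed.

Lemma secure_seq_from_period G : 0 < n -> periodic G ->
  (forall p m, p < n -> followers G p m -> dist (G p) + m <= N) -> secure_seq G.
Proof.
move=> n_gt0 HG small p m F; have E t : G (p + t) = G (p %% n + t).
  by apply: (periodicE HG); rewrite modnDml.
rewrite (periodic_mod p HG); apply: small; first by rewrite ltn_mod.
by move=> t /F; rewrite E.
Qed.

End Sequences.

Section Step.
Variables (N n : nat) (G G' : nat -> State N) (q : nat).
Hypotheses (n_gt1 : 1 < n) (n_le_N : n <= N) (q_lt_n : q < n).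
Hypotheses (G_periodic : periodic n G) (G_step : seq_step n G G' q).
Hypotheses (G_secure : secure_seq G) (G_modest : modest_bullets G).

Local Notation l := (G q).
Local Notation r := (G q.+1).
Local Notation l' := (delta (G q) (G q.+1)).1.
Local Notation r' := (delta (G q) (G q.+1)).2.

Let n_gt0 : 0 < n := ltnW n_gt1.

Lemma step_initiator w : w = q %[mod n] -> G' w = l'.
Proof. by move=> E; rewrite G_step E eqxx. Qed.

Lemma step_responder w : w = q.+1 %[mod n] -> G' w = r'.
Proof.
by move=> E; rewrite G_step E eqxx -[q.+1]addn1 addn_mod_neq.
Qed.

Lemma step_elsewhere w : w != q %[mod n] -> w != q.+1 %[mod n] -> G' w = G w.
Proof. by move=> /negbTE Eq /negbTE Eq1; rewrite G_step Eq Eq1. Qed.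

Lemma step_in_period u : u < n -> G' u = if u == q then l' else if u == q.+1 %% n then r' else G u.
Proof. by move=> u_lt; rewrite G_step (modn_small u_lt) (modn_small q_lt_n). Qed.

Lemma G_succ_mod : G (q.+1 %% n) = r.
Proof. by rewrite -periodic_mod. Qed.

Lemma succ_mod_pos u : u = q.+1 %% n -> 0 < u -> u = q.+1.
Proof.
move=> ->; case: (ltngtP q.+1 n) q_lt_n => [/modn_small -> //|//|->]; by rewrite modnn.
Qed.

Lemma periodic_step : periodic n G'.
Proof. by move=> k; rewrite !G_step modnDr G_periodic. Qed.

Lemma no_spawn : relayed_dist l r < N.
Proof.
rewrite /relayed_dist /sent_dist; case Lr: (leader r); first lia.
have F1 : followers G q.+1 1 by move=> [|t] // _; rewrite addn0 Lr.
case: ifP => _; last by have := G_secure F1; lia.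
case Ll: (leader l); first lia.
have F2 : followers G q 2 by move=> [|[|t]] // _; rewrite ?addn0 ?addn1 ?Ll ?Lr.
by have := G_secure F2; lia.
Qed.

Lemma leader_step_eq w : w != q.+1 %[mod n] -> leader (G' w) = leader (G w).
Proof.
move=> Hw; case: (boolP (w == q %[mod n])) => [/eqP E|Hq]; last by rewrite step_elsewhere.
by rewrite (step_initiator E) delta_leader_l (periodicE G_periodic E).
Qed.

Lemma leader_step_le w : leader (G' w) -> leader (G w).
Proof.
case: (boolP (w == q.+1 %[mod n])) => [/eqP E|Hw]; last by rewrite leader_step_eq.
by rewrite (step_responder E) (periodicE G_periodic E) (delta_leader_r no_spawn) => /andP[].
Qed.

Lemma dist_step_le w : w != q.+1 %[mod n] -> dist (G' w) <= dist (G w).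
Proof.
move=> Hw; case: (boolP (w == q %[mod n])) => [/eqP E|Hq]; last by rewrite step_elsewhere.
by rewrite (step_initiator E) delta_dist_l (periodicE G_periodic E) sent_dist_le.
Qed.

Lemma secure_seq_step_nokill : leader r' = leader r -> secure_seq G'.
Proof.
move=> keep p [|m] F; first by have := ltn_ord (dist (G' p)); rewrite addn0.
have leaderE w : leader (G' w) = leader (G w).
  case: (boolP (w == q.+1 %[mod n])) => [/eqP E|]; last exact: leader_step_eq.
  by rewrite (step_responder E) (periodicE G_periodic E).
have FG : followers G p m.+1 by move=> t /F; rewrite leaderE.
case: (boolP (p == q.+1 %[mod n])) => [/eqP E|Hp]; last first.
  by have := G_secure FG; have := dist_step_le Hp; lia.
rewrite (step_responder E) (delta_dist_r no_spawn) /relayed_dist -(periodicE G_periodic E).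
have /negbTE -> : ~~ leader (G p) by have := FG 0 isT; rewrite addn0.
case: ifP => _; last exact: G_secure.
have El : p + n.-1 = q %[mod n].
  by apply/eqP; rewrite -(eqn_modDr 1) !addn1 -addnS prednK // modnDr E.
rewrite /sent_dist; case Ll: (leader l).
  suff : m < n.-1 by lia.
  rewrite ltnNge; apply/negP => m_ge; have := F n.-1 ltac:(lia).
  by rewrite (step_initiator El) delta_leader_l Ll.
have : followers G (p + n.-1) m.+2.
  move=> [|t] t_lt; first by rewrite addn0 (periodicE G_periodic El) Ll.
  have -> : p + n.-1 + t.+1 = p + t + n by lia.
  by rewrite G_periodic; apply: FG.
by move/G_secure; rewrite (periodicE G_periodic El); lia.
Qed.

Lemma modest_seg_of_fired : leader (G 0) -> followers G 1 q -> fired_bullet l = 2 ->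
  0 < q -> modest_seg G 0 q.
Proof.
move=> L0 F0 fired2 q_gt0; apply: G_modest => //.
have := F0 q.-1; rewrite add1n prednK // => /(_ ltac:(lia)) Ll.
by move: fired2; rewrite add0n /fired_bullet (negbTE Ll).
Qed.

Lemma secure_seq_step_kill : leader (G 0) -> followers G 1 q -> leader r -> ~~ leader r' ->
  secure_seq G'.
Proof.
move=> L0 F0 Lr kill.
(* The leader at 0 survives; a window through the killed leader q.+1 starts at some
   p in (0, q.+1], where modesty gives dist <= p, and ends before n. *)
have [fired2 unguarded] : fired_bullet l == 2 /\ (signal r || ~~ shield r).
  by move: kill; rewrite (delta_leader_r no_spawn) Lr /= negbK => /andP.
have seg := modest_seg_of_fired L0 F0 (eqP fired2).
have q1_lt : q.+1 < n.
  rewrite ltn_neqAle q_lt_n andbT; apply/eqP => q1n.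
  case: (posnP q) => [q0|q_gt0]; first lia.
  have [Sh0 /(_ 0 (leq0n _))[Sg0 _]] := seg q_gt0.
  by move: unguarded; rewrite q1n -[n]add0n G_periodic Sh0 (negbTE Sg0).
have L'0 : leader (G' 0).
  by rewrite leader_step_eq // mod0n (modn_small q1_lt).
apply: secure_seq_from_period n_gt0 periodic_step _ => p [|m] p_lt F.
  by have := ltn_ord (dist (G' p)); rewrite addn0.
have p_gt0 : 0 < p.
  by rewrite lt0n; apply/eqP => p0; have := F 0 isT; rewrite p0 addn0 L'0.
have pm_le : p + m.+1 <= n.
  rewrite leqNgt; apply/negP => pm_gt; have := F (n - p) ltac:(lia).
  by rewrite (_ : p + (n - p) = 0 + n) ?periodic_step ?L'0 //; lia.
have p_q1 : p != q.+1 %[mod n] = (p != q.+1) by rewrite !modn_small.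
case: (boolP (p <= q.+1 < p + m.+1)) => [/andP[p_le q1_lt_pm]|avoid].
  suff : dist (G' p) <= p by lia.
  case: (eqVneq p q.+1) => [pq1|pq1].
    by rewrite pq1 (step_responder (erefl _)) (delta_dist_r no_spawn) /relayed_dist Lr.
  have [_ /(_ p ltac:(lia))[_]] := seg ltac:(lia).
  by rewrite add0n; apply: leq_trans; apply: dist_step_le; rewrite p_q1.
have FG : followers G p m.+1.
  move=> t t_lt; rewrite -leader_step_eq ?F // !modn_small; lia.
by have := G_secure FG; have := dist_step_le (_ : p != q.+1 %[mod n]); rewrite p_q1; lia.
Qed.

Lemma bullet_step_initiator w : w = q %[mod n] -> bullet (G' w) = 0 :> nat.
Proof. by move=> E; rewrite (step_initiator E) delta_bullet_l. Qed.

Lemma leader_step_window m : leader (G' 0) -> followers G' 1 m -> bullet (G' m) = 2 :> nat ->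
  forall u, u <= m -> leader (G u) = leader (G' u).
Proof.
move=> L0 F B u u_le.
case: (boolP (u == q.+1 %[mod n])) => [/eqP E|]; last by move/leader_step_eq ->.
rewrite (step_responder E) (periodicE G_periodic E) (delta_leader_r no_spawn).
case Lr: (leader r) => //=.
(* A leader of G at u > 0 would head a modest segment up to m, so it is shielded and
   silent, and cannot be shot. *)
have m_lt : m < n := followers_lt_period n_gt0 periodic_step L0 F.
case: (posnP u) => [u0|u_gt0].
  by move: L0; rewrite u0 in E; rewrite (step_responder E) (delta_leader_r no_spawn) Lr /= => ->.
have Fu : followers G u.+1 (m - u).
  move=> t t_lt; rewrite -leader_step_eq.
    by have := F (u + t) ltac:(lia); rewrite add1n addSn.
  by rewrite -E addSnnS addn_mod_neq //; lia.
have Bu : bullet (G (u + (m - u))) = 2 :> nat.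
  rewrite subnKC //; case: (ltngtP u m) u_le => [u_lt_m|//|um] _; last first.
    move: B; rewrite -um (step_responder E) (delta_bullet_r no_spawn) Lr (periodicE G_periodic E).
    by case: (signal r).
  have Em1 : m != q.+1 %[mod n].
    by rewrite -E -(subnKC (ltnW u_lt_m)) addn_mod_neq //; lia.
  have Em : m != q %[mod n].
    by apply/eqP => /bullet_step_initiator; rewrite B.
  by rewrite -(step_elsewhere Em Em1).
have Lu : leader (G u) by rewrite (periodicE G_periodic E).
have [Sh /(_ 0 (leq0n _))[Sg _]] := G_modest Lu Fu Bu.
rewrite addn0 (periodicE G_periodic E) in Sh Sg.
by rewrite Sh (negbTE Sg) andbF.
Qed.

Lemma modest_seg_step_stable m : m < n -> m != q -> leader (G 0) -> followers G 1 m ->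
  modest_seg G 0 m -> modest_seg G' 0 m.
Proof.
move=> m_lt m_q L0 F [Sh U].
have [Sg0 _] := U 0 (leq0n _); rewrite add0n in Sg0.
split.
  rewrite step_in_period //; case: eqP => [q0|_].
    by rewrite delta_shield_l -q0 Sh orbT.
  case: eqP => [q1|_] //.
  by rewrite (delta_shield_r no_spawn) -G_succ_mod -q1 L0 (negbTE Sg0).
move=> u u_le; rewrite add0n step_in_period; last lia.
case: eqP => [uq|_].
  subst u; have q1_le : q.+1 <= m by rewrite ltn_neqAle u_le andbT eq_sym.
  have [Sgl Dl] := U q u_le; have [Sgr _] := U q.+1 q1_le; have := F q q1_le.
  rewrite add1n; rewrite add0n in Sgl Dl Sgr => Lr.
  rewrite delta_signal_l delta_dist_l (delta_signal_r no_spawn) (delta_leader_r no_spawn).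
  by rewrite (negbTE Sgl) (negbTE Sgr) (negbTE Lr) (leq_trans (sent_dist_le _)).
case: eqP => [uq1|_]; last exact: U.
have Gu : G u = r by rewrite uq1 G_succ_mod.
have [Sgu Du] := U u u_le; rewrite add0n Gu in Sgu Du.
rewrite (delta_signal_r no_spawn) (delta_dist_r no_spawn) (negbTE Sgu); split => //.
rewrite /relayed_dist; case Lr: (leader r) => //.
have u_gt0 : 0 < u by rewrite lt0n; apply/eqP => u0; move: Lr; rewrite -Gu u0 L0.
have uq1' := succ_mod_pos uq1 u_gt0.
case: ifP => _ //; have [_ Dq] := U q ltac:(lia); rewrite add0n in Dq.
by have := sent_dist_le l; lia.
Qed.

Lemma modest_seg_step_extend : q.+1 < n -> leader (G 0) -> ~~ leader r ->
  bullet r = 0 :> nat -> fired_bullet l = 2 ->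
  modest_seg G 0 q \/ (q = 0 /\ signal l) -> modest_seg G' 0 q.+1.
Proof.
move=> q1_lt L0 Lr br0 fired2 src.
have q1_mod : q.+1 %% n = q.+1 := modn_small q1_lt.
have [Sgl Dl] : ~~ (signal l && ~~ leader l) /\ sent_dist l <= q.
  case: src => [[_ /(_ q (leqnn q))[]]|[q0 _]]; rewrite ?add0n.
    by move=> Sg D; rewrite (negbTE Sg) (leq_trans (sent_dist_le _)).
  by rewrite /sent_dist q0 L0 andbF.
have Sgr' : ~~ signal r' by rewrite (delta_signal_r no_spawn) fired2 !andbF.
have Lr' : ~~ leader r' by rewrite (delta_leader_r no_spawn) (negbTE Lr).
split.
  case: src => [[Sh _]|[q0 Sg]].
    rewrite step_in_period // q1_mod; case: eqP => [q0|_]; last by [].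
    by rewrite delta_shield_l -q0 Sh orbT.
  have E0 : 0 = q %[mod n] by rewrite q0.
  by rewrite (step_initiator E0) delta_shield_l q0 L0; rewrite q0 in Sg; rewrite Sg.
move=> u u_le; rewrite add0n step_in_period ?q1_mod; last lia.
case: eqP => [->|uq].
  by rewrite delta_signal_l delta_dist_l (negbTE Sgl) (negbTE Sgr') (negbTE Lr').
case: eqP => [->|uq1].
  rewrite (delta_signal_r no_spawn) (delta_dist_r no_spawn) /relayed_dist (negbTE Lr) br0.
  by rewrite fired2 !andbF; split => //=; lia.
case: src => [[_ U]|[q0 _]]; last lia.
by have := U u ltac:(lia); rewrite add0n.
Qed.

Lemma modest_seg_step_origin m : leader (G' 0) -> followers G' 1 m ->
  bullet (G' m) = 2 :> nat -> modest_seg G' 0 m.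
Proof.
move=> L0' F' B'.
have m_lt := followers_lt_period n_gt0 periodic_step L0' F'.
have LW := leader_step_window L0' F' B'.
have L0 : leader (G 0) by rewrite LW.
have F : followers G 1 m by move=> t t_lt; rewrite LW; [apply: F' | lia].
have m_q : m != q %[mod n] by apply/eqP => /bullet_step_initiator; rewrite B'.
case: (boolP (bullet (G m) == 2 :> nat)) => [/eqP Bm|Bm].
  apply: modest_seg_step_stable => //; last exact: G_modest.
  by rewrite (modn_small m_lt) (modn_small q_lt_n) in m_q.
(* Otherwise the bullet has just been shot from q to m = q.+1. *)
have Em : m = q.+1 %[mod n].
  by apply/eqP; apply: contraNT Bm => Em1; rewrite -(step_elsewhere m_q Em1) B'.
move: B'; rewrite (step_responder Em) (delta_bullet_r no_spawn) -(periodicE G_periodic Em).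
case Lm: (leader (G m)).
  by case: (signal _) => // /eqP; rewrite (negbTE Bm).
case: ifP => [/eqP br0 fired2|_ /eqP]; last by rewrite (negbTE Bm).
have m_gt0 : 0 < m by rewrite lt0n; apply/eqP => m0; move: Lm; rewrite m0 L0.
have mq1 : m = q.+1 by apply: succ_mod_pos m_gt0; rewrite -(modn_small m_lt).
subst m; apply: modest_seg_step_extend => //; first by rewrite Lm.
case LS: (leader l && signal l).
  right; split; last by case/andP: LS.
  apply/eqP; rewrite -leqn0 leqNgt; apply/negP => q_gt0.
  by have := F q.-1 ltac:(lia); rewrite add1n prednK //; case/andP: LS => ->.
left; apply: G_modest => //; first by move=> t t_lt; apply: F; lia.
by move: fired2; rewrite add0n /fired_bullet LS.
Qed.

End Step.

Section Invariance.
Variables (N n : nat) (G G' : nat -> State N) (q : nat).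
Hypotheses (n_gt1 : 1 < n) (n_le_N : n <= N) (q_lt_n : q < n).
Hypotheses (G_periodic : periodic n G) (G_step : seq_step n G G' q).
Hypotheses (G_secure : secure_seq G) (G_modest : modest_bullets G).

Let n_gt0 : 0 < n := ltnW n_gt1.

Lemma secure_seq_step : secure_seq G'.
Proof.
have nsp := no_spawn n_gt1 n_le_N q_lt_n G_secure.
case: (eqVneq (leader (delta (G q) (G q.+1)).2) (leader (G q.+1))) => [keep|kill].
  exact: (secure_seq_step_nokill n_gt1 n_le_N q_lt_n G_periodic G_step G_secure keep).
have Lr : leader (G q.+1) by move: kill; rewrite (delta_leader_r nsp); case: leader.
have Lr' : ~~ leader (delta (G q) (G q.+1)).2 by move: kill; rewrite Lr; case: leader.
have [s [d [sd d_lt Ls Fs]]] := nearest_leader_left q n_gt0 G_periodic Lr.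
have sdq : s + d = q %[mod n] by rewrite sd modnDr.
have Gd : rebase G s d = G q by rewrite /rebase sd G_periodic.
have Gd1 : rebase G s d.+1 = G q.+1 by rewrite /rebase addnS sd -addSn G_periodic.
apply: (secure_unrebase (s := s) n_gt0 (periodic_step G_periodic G_step)).
apply: (secure_seq_step_kill n_gt1 n_le_N d_lt (periodic_rebase s G_periodic)
          (seq_step_rebase G_periodic G_step sdq) (secure_rebase G_secure)
          (modest_rebase G_modest)).
- by rewrite /rebase addn0.
- by move=> t /Fs; rewrite /rebase addnA addn1.
- by rewrite Gd1.
- by rewrite Gd Gd1.
Qed.

Lemma modest_bullets_step : modest_bullets G'.
Proof.
move=> s m L F B; pose d := (n - s %% n + q) %% n.
have d_lt : d < n by rewrite ltn_mod.
have sdq : s + d = q %[mod n] by rewrite modnDmr addn_rebase_mod.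
have [] := modest_seg_step_origin n_gt1 n_le_N d_lt (periodic_rebase s G_periodic)
             (seq_step_rebase G_periodic G_step sdq) (secure_rebase G_secure)
             (modest_rebase G_modest) (m := m).
- by rewrite /rebase addn0.
- by move=> t /F; rewrite /rebase addnA addn1.
- exact: B.
- by rewrite /rebase addn0 => Sh U; split=> // u /U; rewrite add0n.
Qed.

End Invariance.

Lemma find_iota_leq (a : pred nat) n m : m <= n -> (forall t, t < m -> ~~ a t) ->
  m <= find a (iota 0 n).
Proof.
move=> m_le Na; case: findP => [_|i]; rewrite size_iota // => i_lt Ai _.
have := Ai 0; rewrite nth_iota // add0n => ai.
by rewrite leqNgt; apply/negP => /Na; rewrite ai.
Qed.

Lemma find_iota_eq (a : pred nat) n m : m < n -> a m -> (forall t, t < m -> ~~ a t) ->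
  find a (iota 0 n) = m.
Proof.
move=> m_lt am Na; apply/eqP; rewrite eqn_leq (find_iota_leq (ltnW m_lt) Na) andbT.
case: findP => [/hasPn/(_ m)|i i_lt _ before]; first by rewrite mem_iota add0n m_lt am => /(_ isT).
rewrite leqNgt; apply/negP => m_lt_i.
by have := before 0 m m_lt_i; rewrite nth_iota ?add0n ?am // -(size_iota 0 n) (ltn_trans m_lt_i).
Qed.

Section Configs.
Variables (N n : nat).
Hypothesis n_gt0 : 0 < n.

Definition agent k : 'I_n := Ordinal (ltn_pmod k n_gt0).

Definition unroll (C : config N n) : nat -> State N := fun k => C (agent k).

Lemma unroll_periodic C : periodic n (unroll C).
Proof. by move=> k; rewrite /unroll; congr C; apply: val_inj; rewrite /= modnDr. Qed.

Lemma unroll_ord C (i : 'I_n) : unroll C i = C i.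
Proof. by rewrite /unroll; congr C; apply: val_inj; rewrite /= modn_small. Qed.

Lemma shift_agent a t : shift (agent a) t = agent (a + t).
Proof. by apply: val_inj; rewrite /= modnDml. Qed.

Lemma back_agent a t : t <= a -> t < n -> back (agent a) t = agent (a - t).
Proof.
move=> t_le t_lt; apply: val_inj; rewrite /back /= modnDml (modn_small t_lt).
by rewrite (_ : a + (n - t) = a - t + n) ?modnDr //; lia.
Qed.

Lemma seq_step_unroll D D' : step D D' -> exists2 q, q < n & seq_step n (unroll D) (unroll D') q.
Proof.
move=> [i Hi]; exists i => // w.
have Ei : D i = unroll D i by rewrite unroll_ord.
have Ei1 : D (shift i 1) = unroll D i.+1.
  by rewrite /unroll; congr D; apply: val_inj; rewrite /= addn1.
rewrite {1}/unroll Hi -Ei -Ei1 -!val_eqE /= (modn_small (ltn_ord i)).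
by rewrite -[_ == (i + 1) %% n]/(w == i + 1 %[mod n]) addn1.
Qed.

Lemma distL_unroll C s u : leader (unroll C s) -> followers (unroll C) s.+1 u -> u < n ->
  distL C (agent (s + u)) = u.
Proof.
move=> Ls F u_lt; apply: find_iota_eq => //.
  by rewrite back_agent ?addnK //; lia.
move=> t t_lt; rewrite back_agent; [|lia|lia].
by rewrite (_ : s + u - t = s.+1 + (u - t.+1)); [apply: F|]; lia.
Qed.

Lemma secure_seq_of_NI C : n <= N -> C_NI C -> secure_seq (unroll C).
Proof.
move=> n_le_N [[[j Lj] _] [Hsec _]] p [|m] F.
  by have := ltn_ord (dist (C (agent p))); rewrite addn0.
have Lp : ~~ leader (C (agent p)) by have := F 0 isT; rewrite addn0.
have m_le : m.+1 <= n.
  rewrite -(unroll_ord C) in Lj.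
  have [b /andP[p_lt_b b_le] Lb] := leader_in_period p n_gt0 (unroll_periodic C) Lj.
  rewrite leqNgt; apply/negP => m_gt; have := F (b - p) ltac:(lia).
  by rewrite subnKC ?Lb // ltnW.
have dR : m.+1 <= distR C (agent p).
  by apply: find_iota_leq => // t t_lt; rewrite shift_agent; apply: F.
have dR_le : distR C (agent p) <= n.
  by have := find_size (fun j => leader (C (shift (agent p) j))) (iota 0 n); rewrite size_iota.
by have := Hsec (agent p); rewrite /secure /unroll (negbTE Lp); lia.
Qed.

Lemma modest_bullets_of_NI C : C_NI C -> modest_bullets (unroll C).
Proof.
move=> [_ [_ Hmod]] s m Ls F B.
have m_lt := followers_lt_period n_gt0 (unroll_periodic C) Ls F.
have := Hmod (agent (s + m)) B; rewrite /modest /peaceful (distL_unroll Ls F m_lt).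
move=> /andP[/andP[Sh /allP Sg] /allP Dl]; split.
  by move: Sh; rewrite back_agent ?addnK //; lia.
move=> u u_le; have u_in : m - u \in iota 0 m.+1 by rewrite mem_iota; lia.
have Bk : back (agent (s + m)) (m - u) = agent (s + u).
  by rewrite back_agent; [congr agent|..]; lia.
split; first by have := Sg _ u_in; rewrite Bk.
have Fu : followers (unroll C) s.+1 u by move=> t t_lt; apply: F; lia.
by have := Dl _ u_in; rewrite Bk (distL_unroll Ls Fu) //; lia.
Qed.

End Configs.

Unset Implicit Arguments.

Theorem lemma7 (N n : nat) (Hn2 : 2 <= n) (HnN : n <= N) (C0 D D' : config N n) :
  C_NI C0 -> reachable C0 D -> step D D' ->
  forall i : 'I_n, ~~ leader (D i) -> ~~ leader (D' i).
Proof.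
move=> NI reach st i; have n_gt0 : 0 < n by lia.
have inv E : reachable C0 E -> secure_seq (unroll n_gt0 E) /\ modest_bullets (unroll n_gt0 E).
  elim=> [|E1 E2 _ [sec mod] st'].
    by split; [apply: secure_seq_of_NI | apply: modest_bullets_of_NI].
  have [q q_lt sst] := seq_step_unroll n_gt0 st'.
  have per := unroll_periodic n_gt0 E1.
  by split; [apply: (secure_seq_step Hn2 HnN q_lt per sst sec mod)
            |apply: (modest_bullets_step Hn2 HnN per sst sec mod)].
have [sec _] := inv D reach.
have [q q_lt sst] := seq_step_unroll n_gt0 st.
apply: contra; rewrite -!(unroll_ord n_gt0).
exact: (leader_step_le Hn2 HnN q_lt (unroll_periodic n_gt0 D) sst sec).
Qed.
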